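(* Let $S$ be a finite set of points in the plane whose convex hull is the triangle $ABC$ with $A,B,C\in S$, and suppose $S$ contains at least one point other than $A,B,C$. Let $A_1$ be a point of $S\setminus\{A,B,C\}$ at maximum distance from the line $BC$ among the points of $S\setminus\{A,B,C\}$. Then the segment $AA_1$ is an edge of every triangulation of $S$.
   Context: A triangulation of a finite planar point set $S$ is a maximal set of straight line segments whose endpoints are in $S$, which contain no point of $S$ other than their endpoints, and any two of which meet at most in a common endpoint. *)

From HB Require Import structures.
From mathcomp Require Import all_boot all_order all_algebra.
Set Implicit Arguments. Unset Strict Implicit. Unset Printing Implicit Defensive.
Import Order.TTheory GRing.Theory Num.Theory.
Local Open Scope ring_scope.

Definition pt (R : rcfType) := (R * R)%type.

Section Geometry.
Variable R : rcfType.

(* twice the signed area of triangle pqr *)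
Definition cross (p q r : pt R) : R :=
  (q.1 - p.1) * (r.2 - p.2) - (q.2 - p.2) * (r.1 - p.1).

Definition dist_line (b c x : pt R) : R :=
  `|cross b c x| / Num.sqrt ((c.1 - b.1) ^+ 2 + (c.2 - b.2) ^+ 2).

Definition hull (s : seq (pt R)) (x : pt R) : Prop :=
  exists w : nat -> R,
    (forall i, 0 <= w i) /\ \sum_(i < size s) w i = 1 /\
    x = (\sum_(i < size s) w i * (nth (0, 0) s i).1,
         \sum_(i < size s) w i * (nth (0, 0) s i).2).

Definition in_cseg (p q x : pt R) : Prop :=
  exists t : R, 0 <= t <= 1 /\
    x = (p.1 + t * (q.1 - p.1), p.2 + t * (q.2 - p.2)).

(* A segment is given by an (ordered) pair of endpoints; two pairs denote the
   same segment iff they have the same endpoints. *)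
Definition same_seg (e f : pt R * pt R) : Prop :=
  e = f \/ e = (f.2, f.1).

Definition is_endpoint (e : pt R * pt R) (x : pt R) : Prop := x = e.1 \/ x = e.2.

Definition valid_seg (S : seq (pt R)) (e : pt R * pt R) : Prop :=
  e.1 \in S /\ e.2 \in S /\ e.1 <> e.2 /\
  (forall x, x \in S -> in_cseg e.1 e.2 x -> is_endpoint e x).

Definition meet_ok (e f : pt R * pt R) : Prop :=
  forall x, in_cseg e.1 e.2 x -> in_cseg f.1 f.2 x ->
    is_endpoint e x /\ is_endpoint f x.

Definition seg_family_ok (S : seq (pt R)) (T : pt R * pt R -> Prop) : Prop :=
  (forall e, T e -> valid_seg S e) /\
  (forall e f, T e -> T f -> ~ same_seg e f -> meet_ok e f).

Definition is_triangulation (S : seq (pt R)) (T : pt R * pt R -> Prop) : Prop :=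
  seg_family_ok S T /\
  (forall e, seg_family_ok S (fun f => T f \/ f = e) ->
     exists f, T f /\ same_seg e f).

End Geometry.

(* Let alpha be the barycentric coordinate of the vertex A, i.e. the signed
   distance to BC normalised so that alpha A = 1. Since S lies in the triangle ABC,
   alpha is in [0, 1) on S minus A, and by the choice of A1 it is at most
   alpha A1 there, while it exceeds alpha A1 at every point of AA1 other than
   A1. As alpha is affine, a segment between points of S other than A cannot
   meet AA1 outside A1, and a segment from A meeting AA1 elsewhere than at A
   lies on the same ray, so it is AA1 itself. Hence AA1 is compatible with
   every triangulation, which by maximality must contain it. *)
From HB Require Import structures.
From mathcomp Require Import all_boot all_order all_algebra ring lra.
Set Implicit Arguments. Unset Strict Implicit. Unset Printing Implicit Defensive.
Import Order.TTheory GRing.Theory Num.Theory.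
Local Open Scope ring_scope.

Section Segments.
Variable R : rcfType.
Implicit Types (a b c p q x : pt R) (S : seq (pt R)) (e f : pt R * pt R).

Definition seg_pt p q (t : R) : pt R :=
  (p.1 + t * (q.1 - p.1), p.2 + t * (q.2 - p.2)).

Lemma seg_pt0 p q : seg_pt p q 0 = p.
Proof. by rewrite /seg_pt !mul0r !addr0; case: p. Qed.

Lemma seg_pt1 p q : seg_pt p q 1 = q.
Proof. by rewrite /seg_pt !mul1r !subrKC; case: q. Qed.

Lemma in_csegP p q x :
  in_cseg p q x -> exists2 t, 0 <= t <= 1 & x = seg_pt p q t.
Proof. by case=> t []; exists t. Qed.

Lemma in_csegC p q x : in_cseg p q x -> in_cseg q p x.
Proof.
case=> t [/andP[t0 t1] ->]; exists (1 - t); split; first by apply/andP; lra.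
by congr pair; ring.
Qed.

Lemma seg_pt_rescale a p q t u :
  u != 0 -> seg_pt a p t = seg_pt a q u -> q = seg_pt a p (t / u).
Proof.
case: q => q1 q2 u0 [/addrI e1 /addrI e2]; rewrite /seg_pt /=.
by rewrite !(mulrAC t u^-1) e1 e2 ![u * _]mulrC !mulfK // !subrKC.
Qed.

Lemma cseg_ray a p q x :
  in_cseg a p x -> in_cseg a q x -> x != a -> in_cseg a p q \/ in_cseg a q p.
Proof.
case/in_csegP=> t t01 -> /in_csegP [u u01 xE] xa.
have t0 : t != 0 by apply: contraNneq xa => ->; rewrite seg_pt0.
have u0 : u != 0 by apply: contraNneq xa => u0; rewrite xE u0 seg_pt0.
wlog tu : p q t u t01 u01 t0 u0 xE {xa} / t <= u.
  move=> hw; have [|/ltW] := lerP t u; first exact: hw.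
  by rewrite or_comm; apply: hw; rewrite -?xE.
case/andP: t01 => t_ge0 _; left; exists (t / u); split; last exact: seg_pt_rescale.
by rewrite divr_ge0 ?ler_pdivrMr ?mul1r ?lt_def ?u0 //; case/andP: u01.
Qed.

Lemma same_segC e f : same_seg e f -> same_seg f e.
Proof. by case: e f => [? ?] [? ?] [] [-> ->]; [left | right]. Qed.

Lemma meet_okC e f : meet_ok e f -> meet_ok f e.
Proof. by move=> hef x xf xe; have [] := hef x xe xf. Qed.

Lemma valid_segC S p q : valid_seg S (p, q) -> valid_seg S (q, p).
Proof.
case=> /= pS [qS [pq hpq]]; do !split => //; first exact/nesym.
by move=> x xS /in_csegC /(hpq x xS) [] ->; [right | left].
Qed.

Lemma valid_seg_ray S a p q x :
  valid_seg S (a, p) -> valid_seg S (a, q) ->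
  in_cseg a p x -> in_cseg a q x -> x != a -> p = q.
Proof.
move=> [_ [pS [ap hap]]] [_ [qS [aq haq]]] /= xp xq xa.
have [/(hap q qS) [] | /(haq p pS) []] /= := cseg_ray xp xq xa; by [|move=> /esym].
Qed.

Lemma triangulation_mem S T e :
  is_triangulation S T -> valid_seg S e ->
  (forall f, valid_seg S f -> ~ same_seg e f -> meet_ok e f) ->
  exists f, T f /\ same_seg e f.
Proof.
move=> [[Tvalid Tmeet] Tmax] ev emeet; apply: Tmax; split.
  by move=> f [/Tvalid | ->].
move=> f g [Tf | ->] [Tg | ->] fg; first exact: Tmeet.
- by apply/meet_okC/emeet => [|/same_segC]; first exact: Tvalid.
- exact: emeet (Tvalid _ Tg) fg.
- by case: fg; left.
Qed.

End Segments.

Section Barycentric.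
Variable R : rcfType.
Implicit Types (a b c p q x : pt R) (S : seq (pt R)).

Lemma cross_rot a b c : cross a b c = cross b c a.
Proof. by rewrite /cross; ring. Qed.

Lemma dist_line_le b c x y : b != c ->
  (dist_line b c x <= dist_line b c y) = (`|cross b c x| <= `|cross b c y|).
Proof.
move=> bc; rewrite /dist_line ler_pM2r // invr_gt0 sqrtr_gt0 lt_def.
rewrite addr_ge0 ?sqr_ge0 // andbT paddr_eq0 ?sqr_ge0 // !sqrf_eq0 !subr_eq0.
by apply: contra bc; case: b c => [? ?] [? ?] /= /andP[/eqP -> /eqP ->].
Qed.

Lemma hull_mem S x : x \in S -> hull S x.
Proof.
move=> xS; pose i0 : 'I_(size S) := Ordinal (etrans (index_mem x S) xS).
exists (fun i => (i == index x S)%:R); split; first by move=> i; apply: ler0n.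
have pick (F : nat -> R) :
    \sum_(i < size S) ((i : nat) == index x S)%:R * F i = F i0.
  rewrite (bigD1 i0) //= eqxx mul1r big1 ?addr0 // => i ii0.
  rewrite (_ : _ == _ = false) ?mul0r //.
  by apply: contraNF ii0 => /eqP ix; exact/eqP/val_inj.
split; first by have := pick (fun=> 1); under eq_bigr do rewrite mulr1.
rewrite (pick (fun i => (nth (0, 0) S i).1)) (pick (fun i => (nth (0, 0) S i).2)).
by rewrite /= nth_index //; case: x xS {i0 pick}.
Qed.

Lemma hull3P a b c x : hull [:: a; b; c] x ->
  exists al be ga : R, [/\ 0 <= al, 0 <= be, 0 <= ga, al + be + ga = 1 &
    x = (al * a.1 + be * b.1 + ga * c.1, al * a.2 + be * b.2 + ga * c.2)].
Proof.
case=> w [w_ge0 [+ ->]]; rewrite /= !big_ord_recl !big_ord0 /= => w1.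
by exists (w 0%N), (w 1%N), (w 2%N); split => //; [rewrite -w1 | congr pair]; ring.
Qed.

Definition bary a b c x : R := cross b c x / cross b c a.

Lemma bary_a a b c : cross b c a != 0 -> bary a b c a = 1.
Proof. exact: divff. Qed.

Lemma bary_b a b c : bary a b c b = 0.
Proof. by rewrite /bary /cross (_ : _ - _ = 0) ?mul0r //; ring. Qed.

Lemma bary_c a b c : bary a b c c = 0.
Proof. by rewrite /bary /cross (_ : _ - _ = 0) ?mul0r //; ring. Qed.

Lemma bary_seg_pt a b c p q t :
  bary a b c (seg_pt p q t) = bary a b c p + t * (bary a b c q - bary a b c p).
Proof. by rewrite /bary /cross /=; ring. Qed.

Lemma bary_comb a b c al be ga : cross b c a != 0 -> al + be + ga = 1 ->
  bary a b c (al * a.1 + be * b.1 + ga * c.1, al * a.2 + be * b.2 + ga * c.2) = al.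
Proof.
move=> abc sum1; rewrite /bary -[RHS](mulfK abc); congr (_ / _).
by rewrite /cross /= (_ : ga = 1 - al - be); [ring | rewrite -sum1; ring].
Qed.

Lemma bary_hull3_ge0 a b c x :
  cross b c a != 0 -> hull [:: a; b; c] x -> 0 <= bary a b c x.
Proof.
by move=> abc /hull3P [al [be [ga [al0 _ _ sum1 ->]]]]; rewrite bary_comb.
Qed.

Lemma bary_hull3_lt1 a b c x :
  cross b c a != 0 -> hull [:: a; b; c] x -> x != a -> bary a b c x < 1.
Proof.
move=> abc /hull3P [al [be [ga [al0 be0 ga0 sum1 ->]]]] xa.
rewrite bary_comb // lt_neqAle; apply/andP; split; last by lra.
apply: contraNneq xa => al1; have be00 : be = 0 by lra.
have ga00 : ga = 0 by lra.
by rewrite al1 be00 ga00 !mul0r !addr0 !mul1r; case: (a).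
Qed.

Lemma bary_cseg_le a b c p q x m : in_cseg p q x ->
  bary a b c p <= m -> bary a b c q <= m -> bary a b c x <= m.
Proof. by case/in_csegP=> t /andP[t0 t1] ->; rewrite bary_seg_pt; nra. Qed.

Lemma bary_cseg_gt a b c p q x : in_cseg p q x -> x != q ->
  bary a b c q < bary a b c p -> bary a b c q < bary a b c x.
Proof.
case/in_csegP=> t /andP[t0 t1] -> xq qp; rewrite bary_seg_pt.
have t_lt1 : t < 1.
  by rewrite lt_neqAle t1 andbT; apply: contraNneq xq => ->; rewrite seg_pt1.
nra.
Qed.

End Barycentric.

Section FarthestPoint.
Variables (R : rcfType) (S : seq (pt R)) (A B C A1 : pt R).
Hypotheses (AS : A \in S) (A1S : A1 \in S) (A1_new : A1 \notin [:: A; B; C]).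
Hypothesis nondeg : cross B C A != 0.
Hypothesis S_sub_hull : forall x, x \in S -> hull [:: A; B; C] x.
Hypothesis A1_far : forall P, P \in S -> P \notin [:: A; B; C] ->
  dist_line B C P <= dist_line B C A1.

Local Notation alpha := (bary A B C).

Let A1A : A1 != A.
Proof. by apply: contraNneq A1_new => ->; rewrite mem_head. Qed.

Lemma bary_mem_ge0 P : P \in S -> 0 <= alpha P.
Proof. by move/S_sub_hull; apply: bary_hull3_ge0. Qed.

Lemma bary_mem_le P : P \in S -> P != A -> alpha P <= alpha A1.
Proof.
move=> PS PA; have A1_ge0 := bary_mem_ge0 A1S.
have [->|PB] := eqVneq P B; first by rewrite bary_b.
have [->|PC] := eqVneq P C; first by rewrite bary_c.
have BC : B != C by apply: contraNneq nondeg => ->; rewrite /cross; apply/eqP; ring.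
have := A1_far PS; rewrite dist_line_le // !inE (negbTE PA) (negbTE PB) (negbTE PC).
move=> /(_ isT) farP; rewrite -(ger0_norm (bary_mem_ge0 PS)) -(ger0_norm A1_ge0).
by rewrite /bary !normrM ler_wpM2r.
Qed.

Lemma bary_AA1_gt X : in_cseg A A1 X -> X != A1 -> alpha A1 < alpha X.
Proof.
move=> XAA1 XA1; apply: bary_cseg_gt XAA1 XA1 _.
by rewrite bary_a //; apply: bary_hull3_lt1 (S_sub_hull A1S) A1A.
Qed.

Lemma valid_AA1 : valid_seg S (A, A1).
Proof.
do !split => //=; first by apply/eqP; rewrite eq_sym.
move=> x xS xAA1; have [->|xA1] := eqVneq x A1; first by right.
have [->|xA] := eqVneq x A; first by left.
by have := bary_mem_le xS xA; rewrite leNgt bary_AA1_gt.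
Qed.

Lemma meet_ok_AA1 e : valid_seg S e -> ~ same_seg (A, A1) e -> meet_ok (A, A1) e.
Proof.
case: e => P Q PQvalid; have [/= PS [QS [_ PQ_empty]]] := PQvalid.
move=> not_same X /= XAA1 XPQ.
have [XA|XA] := eqVneq X A; first by subst X; split; [left | apply: PQ_empty].
have [XA1|XA1] := eqVneq X A1; first by subst X; split; [right | apply: PQ_empty].
have [PA|PA] := eqVneq P A.
  subst P; case: not_same; left.
  by rewrite (valid_seg_ray valid_AA1 PQvalid XAA1 XPQ XA).
have [QA|QA] := eqVneq Q A.
  subst Q; case: not_same; right.
  by rewrite (valid_seg_ray valid_AA1 (valid_segC PQvalid) XAA1 (in_csegC XPQ) XA).
have := bary_cseg_le XPQ (bary_mem_le PS PA) (bary_mem_le QS QA).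
by rewrite leNgt bary_AA1_gt.
Qed.

End FarthestPoint.

Theorem lemma4p2 (R : rcfType) (S : seq (pt R)) (A B C A1 : pt R) :
  A \in S -> B \in S -> C \in S ->
  cross A B C != 0 ->
  (forall x, hull S x <-> hull [:: A; B; C] x) ->
  (exists P, P \in S /\ P \notin [:: A; B; C]) ->
  A1 \in S -> A1 \notin [:: A; B; C] ->
  (forall P, P \in S -> P \notin [:: A; B; C] ->
     dist_line B C P <= dist_line B C A1) ->
  forall T : pt R * pt R -> Prop, is_triangulation S T ->
    exists f, T f /\ same_seg (A, A1) f.
Proof.
move=> AS _ _ nondeg hullS _ A1S A1_new A1_far T triT.
rewrite cross_rot in nondeg.
have S_sub_hull x : x \in S -> hull [:: A; B; C] x by move/hull_mem/hullS.
apply: triangulation_mem triT (valid_AA1 AS A1S A1_new nondeg S_sub_hull A1_far) _.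
exact: (meet_ok_AA1 AS A1S A1_new nondeg S_sub_hull A1_far).
Qed.
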